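(* Let $q\in\mathrm{prob}(\{0,1\}^2)$. The set $C:=\{(\pi_1,\chi^{(2)}_{1|1}-\chi^{(1)}_{1|1}):(\pi,\chi)\in\Theta_2,\ \mu(\pi,\chi)=q\}$ is nonempty and equals the set of all $(\mathrm{Pr},\Delta\mathrm{Se})\in[0,1]\times[-1,1]$ satisfying $\max\{-q_{10},\ q_{01}-q_{10}+\mathrm{Pr}-1\}\le\mathrm{Pr}\,\Delta\mathrm{Se}\le\min\{q_{01},\ q_{01}-q_{10}+1-\mathrm{Pr}\}$.
   Context: $\mathrm{prob}(\mathcal{X})$ is the set of probability densities on a finite set $\mathcal{X}$; $\mathrm{markov}(\mathcal{X},\mathcal{Y})$ the set of maps $(x,y)\mapsto p_{y|x}$ with $p_{\cdot|x}\in\mathrm{prob}(\mathcal{Y})$. $\Theta_2:=\mathrm{prob}(\{0,1\})\times\mathrm{markov}(\{0,1\},\{0,1\}^2)$, $\mu(\pi,\chi)_j:=\sum_{i=0}^1\pi_i\chi_{j|i}$ for $j\in\{0,1\}^2$, $\chi^{(1)}_{\iota|i}:=\chi_{\iota0|i}+\chi_{\iota1|i}$, $\chi^{(2)}_{\iota|i}:=\chi_{0\iota|i}+\chi_{1\iota|i}$. *)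

(* Encoding: {0,1} = bool (0 = false, 1 = true),
   {0,1}^2 = bool * bool, where (a,b) stands for the string "ab". *)
From mathcomp Require Import all_boot all_order all_algebra.
Set Implicit Arguments. Unset Strict Implicit. Unset Printing Implicit Defensive.
Import Order.TTheory GRing.Theory Num.Theory.
Local Open Scope ring_scope.

Definition prob (R : numDomainType) (X : finType) (p : X -> R) : Prop :=
  (forall x, 0 <= p x) /\ \sum_(x : X) p x = 1.

(* k x y = p_{y|x}; markov(X,Y) *)
Definition markov (R : numDomainType) (X Y : finType) (k : X -> Y -> R) : Prop :=
  forall x, prob (k x).

Definition Theta2 (R : numDomainType) (pi : bool -> R)
  (chi : bool -> bool * bool -> R) : Prop :=
  prob pi /\ markov chi.

Definition mu (R : numDomainType) (pi : bool -> R) (chi : bool -> bool * bool -> R)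
  (j : bool * bool) : R := \sum_(i : bool) pi i * chi i j.

Definition chi1 (R : numDomainType) (chi : bool -> bool * bool -> R) (iota i : bool) : R :=
  chi i (iota, false) + chi i (iota, true).

Definition chi2 (R : numDomainType) (chi : bool -> bool * bool -> R) (iota i : bool) : R :=
  chi i (false, iota) + chi i (true, iota).

Definition Cset (R : numDomainType) (q : bool * bool -> R) (x : R * R) : Prop :=
  exists (pi : bool -> R) (chi : bool -> bool * bool -> R),
    Theta2 pi chi /\ (forall j, mu pi chi j = q j) /\
    x = (pi true, chi2 chi true true - chi1 chi true true).

From mathcomp Require Import all_boot all_order all_algebra.
From mathcomp Require Import ring lra.
Set Implicit Arguments.
Unset Strict Implicit.
Unset Printing Implicit Defensive.

Import Order.TTheory GRing.Theory Num.Theory.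
Local Open Scope ring_scope.

(* A pair (Pr, DSe) lies in C iff q = (1 - Pr) x + Pr y for densities x, y with
   DSe = y_01 - y_10.  For 0 < Pr < 1 this amounts to a sub-density z = Pr y of q
   of mass Pr with z_01 - z_10 = Pr DSe, the complement q - z being (1 - Pr) x.
   The bounds on Pr DSe express z_01 <= q_01, z_10 <= q_10 and that the
   off-diagonal difference of q - z is at most its mass; conversely they leave
   room to place the off-diagonal mass of z and then fill its diagonal.  At
   Pr = 0 or Pr = 1 one of x, y is unconstrained and is chosen directly. *)

Section Densities.
Variable R : realFieldType.

Lemma sum_pair_bool (F : bool * bool -> R) :
  \sum_(j : bool * bool) F j =
  F (false, false) + F (false, true) + F (true, false) + F (true, true).
Proof.
rewrite (eq_bigr (fun j => F (j.1, j.2))); last by case.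
by rewrite -(pair_big xpredT xpredT (fun i k => F (i, k))) /= !big_bool /=; ring.
Qed.

Lemma prob_pair_bool (p : bool * bool -> R) :
  prob p <->
  [/\ forall j, 0 <= p j &
      p (false, false) + p (false, true) + p (true, false) + p (true, true) = 1].
Proof. by rewrite /prob sum_pair_bool. Qed.

Lemma prob_offdiag (p : bool * bool -> R) : prob p ->
  [/\ 0 <= p (false, true), 0 <= p (true, false)
    & p (false, true) + p (true, false) <= 1].
Proof.
move=> /prob_pair_bool[p_ge0 p_sum].
have := p_ge0 (false, false); have := p_ge0 (true, true).
by split; rewrite ?p_ge0 //; lra.
Qed.

Lemma prob_scale (X : finType) (f : X -> R) (m : R) :
  0 < m -> (forall x, 0 <= f x) -> \sum_x f x = m -> prob (fun x => f x / m).
Proof.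
move=> m_gt0 f_ge0 f_sum; split=> [x|]; first by rewrite divr_ge0 // ltW.
by rewrite -mulr_suml f_sum divff ?gt_eqF.
Qed.

Lemma exists_prob_offdiag_diff (d : R) : -1 <= d <= 1 ->
  exists y : bool * bool -> R, prob y /\ y (false, true) - y (true, false) = d.
Proof.
move=> /andP[d_ge d_le].
exists (fun j => match j with
  | (false, true) => (1 + d) / 2 | (true, false) => (1 - d) / 2 | _ => 0 end).
split; last by field.
by apply/prob_pair_bool; split=> [[[] []]|]; [lra.. | field].
Qed.

Lemma exists_split (a d s : R) : 0 <= a -> 0 <= d -> 0 <= s <= a + d ->
  exists u, 0 <= u <= a /\ 0 <= s - u <= d.
Proof.
move=> a_ge0 d_ge0 /andP[s_ge0 s_le].
by have [a_le_s|s_lt_a] := leP a s; [exists a | exists s]; split; apply/andP; lra.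
Qed.

Lemma exists_subdensity (q : bool * bool -> R) (m D : R) : prob q ->
  - m <= D <= m -> - q (true, false) <= D <= q (false, true) ->
  q (false, true) - q (true, false) - (1 - m) <= D
    <= q (false, true) - q (true, false) + (1 - m) ->
  exists z : bool * bool -> R,
    [/\ forall j, 0 <= z j <= q j, \sum_j z j = m
      & z (false, true) - z (true, false) = D].
Proof.
move=> /prob_pair_bool[q_ge0 q_sum] /andP[Dm1 Dm2] /andP[Dc Db] /andP[Dbc1 Dbc2].
have := q_ge0 (false, false); have := q_ge0 (false, true).
have := q_ge0 (true, false); have := q_ge0 (true, true).
move: q_sum Dc Db Dbc1 Dbc2.
set a := q (false, false); set b := q (false, true).
set c := q (true, false); set d := q (true, true).
move=> q_sum Dc Db Dbc1 Dbc2 d_ge0 c_ge0 b_ge0 a_ge0.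
(* z puts t on (1,0) and D + t on (0,1): t must exceed 0, -D and the value that
   leaves at most a + d for the diagonal, and stay below c, b - D and (m - D)/2;
   the hypotheses say that each lower bound is below each upper one. *)
pose t := Num.max (Num.max 0 (- D)) ((m - 1 + b + c - D) / 2).
have [t_ge0 t_geD t_ge] : [/\ 0 <= t, - D <= t & (m - 1 + b + c - D) / 2 <= t].
  by rewrite !le_max !lexx ?orbT.
have [t_le_c t_le_b t_le_m] : [/\ t <= c, t <= b - D & t <= (m - D) / 2].
  by rewrite !ge_max; split; apply/andP; split; try apply/andP; try split; lra.
have [|u [/andP[u_ge0 u_le] /andP[v_ge0 v_le]]] :=
  @exists_split a d (m - 2 * t - D) a_ge0 d_ge0.
  by apply/andP; lra.
exists (fun j => match j with
  | (false, false) => u | (false, true) => D + t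
  | (true, false) => t | (true, true) => m - 2 * t - D - u end).
split; last by ring.
  by move=> [[] []]; rewrite -/a -/b -/c -/d; apply/andP; lra.
by rewrite sum_pair_bool; ring.
Qed.

Lemma CsetP (q : bool * bool -> R) (Pr DSe : R) :
  Cset q (Pr, DSe) <->
  exists x y : bool * bool -> R,
    [/\ 0 <= Pr <= 1, prob x, prob y,
        forall j, q j = (1 - Pr) * x j + Pr * y j
      & DSe = y (false, true) - y (true, false)].
Proof.
split.
  move=> [pi [chi [[[pi_ge0 pi_sum] chi_prob] [mu_q [-> ->]]]]].
  rewrite big_bool /= in pi_sum.
  have pi_false : pi false = 1 - pi true by lra.
  exists (chi false), (chi true); split=> //.
  - by apply/andP; split; [exact: pi_ge0 | have := pi_ge0 false; lra].
  - by move=> j; rewrite -mu_q /mu big_bool /= pi_false addrC.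
  - by rewrite /chi2 /chi1; ring.
move=> [x [y [/andP[Pr_ge0 Pr_le1] x_prob y_prob q_mix ->]]].
exists (fun b => if b then Pr else 1 - Pr), (fun b => if b then y else x).
split; [split; [split|] | split].
- by case=> //; lra.
- by rewrite big_bool /=; ring.
- by case.
- by move=> j; rewrite /mu big_bool /= q_mix addrC.
- by rewrite /chi2 /chi1 /=; congr pair; ring.
Qed.

Definition Cregion (q : bool * bool -> R) (Pr DSe : R) : Prop :=
  [/\ 0 <= Pr <= 1, -1 <= DSe <= 1,
      Num.max (- q (true, false)) (q (false, true) - q (true, false) + Pr - 1)
        <= Pr * DSe
    & Pr * DSe
        <= Num.min (q (false, true)) (q (false, true) - q (true, false) + 1 - Pr)].

Lemma Cset_subset_Cregion (q : bool * bool -> R) (Pr DSe : R) :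
  Cset q (Pr, DSe) -> Cregion q Pr DSe.
Proof.
move=> /CsetP[x [y [/andP[Pr_ge0 Pr_le1] x_prob y_prob q_mix ->]]].
have [x01_ge0 x10_ge0 x_off] := prob_offdiag x_prob.
have [y01_ge0 y10_ge0 y_off] := prob_offdiag y_prob.
have Pr'_ge0 : 0 <= 1 - Pr by rewrite subr_ge0.
have := mulr_ge0 Pr'_ge0 x01_ge0; have := mulr_ge0 Pr'_ge0 x10_ge0.
have := mulr_ge0 Pr_ge0 y01_ge0; have := mulr_ge0 Pr_ge0 y10_ge0.
have x_off' : 0 <= 1 - (x (false, true) + x (true, false)) by rewrite subr_ge0.
have := mulr_ge0 Pr'_ge0 x_off'.
rewrite /Cregion !q_mix ge_max le_min => *.
by split; apply/andP; split; try apply/andP; try split; lra.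
Qed.

Lemma Cregion_subset_Cset (q : bool * bool -> R) (Pr DSe : R) : prob q ->
  Cregion q Pr DSe -> Cset q (Pr, DSe).
Proof.
move=> q_prob [/andP[Pr_ge0 Pr_le1] DSe_bd].
rewrite ge_max le_min => /andP[lo_c lo_bc] /andP[up_b up_bc].
have [b_ge0 c_ge0 bc_le1] := prob_offdiag q_prob.
apply/CsetP.
have [Pr0|Pr_neq0] := eqVneq Pr 0.
  have [y [y_prob y_diff]] := exists_prob_offdiag_diff DSe_bd.
  by exists q, y; rewrite Pr0; split=> // [|j]; [lra | ring].
have [Pr1|Pr_neq1] := eqVneq Pr 1.
  by exists q, q; rewrite Pr1 in lo_bc up_bc *; split=> // [|j|]; [lra | ring | lra].
have Pr_gt0 : 0 < Pr by rewrite lt_neqAle eq_sym Pr_neq0 Pr_ge0.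
have Pr_lt1 : Pr < 1 by rewrite lt_neqAle Pr_neq1 Pr_le1.
have [|||z [z_bounds z_sum z_diff]] := @exists_subdensity q Pr (Pr * DSe) q_prob.
- by case/andP: DSe_bd => *; apply/andP; nra.
- by apply/andP; lra.
- by apply/andP; lra.
exists (fun j => (q j - z j) / (1 - Pr)), (fun j => z j / Pr); split.
- by apply/andP; lra.
- apply: prob_scale => [|j|]; first by lra.
    by have /andP[] := z_bounds j; lra.
  by case: q_prob => _ q_sum; rewrite sumrB q_sum z_sum.
- by apply: prob_scale => // j; have /andP[] := z_bounds j.
- by move=> j; field; rewrite ?gt_eqF // subr_gt0.
- by rewrite -mulrBl z_diff; field; rewrite gt_eqF.
Qed.

End Densities.

Theorem lemma5 (R : realFieldType) (q : bool * bool -> R) (hq : prob q) :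
  (exists x : R * R, Cset q x) /\
  (forall Pr DSe : R,
     Cset q (Pr, DSe) <->
     [/\ 0 <= Pr <= 1, -1 <= DSe <= 1,
         Num.max (- q (true, false)) (q (false, true) - q (true, false) + Pr - 1)
           <= Pr * DSe
       & Pr * DSe
           <= Num.min (q (false, true)) (q (false, true) - q (true, false) + 1 - Pr)]).
Proof.
have CsetE Pr DSe : Cset q (Pr, DSe) <-> Cregion q Pr DSe.
  by split; [exact: Cset_subset_Cregion | exact: Cregion_subset_Cset].
split; last exact: CsetE.
have [b_ge0 c_ge0 bc_le1] := prob_offdiag hq.
exists (0, 0); apply/CsetE; rewrite /Cregion mulr0 ge_max le_min.
by split; apply/andP; split; lra.
Qed.
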